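(* Let $\mathcal{A}$ be a semiprime unital algebra over a field $F$ with $\operatorname{char}(F)\neq2$. Then $\operatorname{QJCent}(\mathcal{A})=\operatorname{Cent}(\mathcal{A})$.
   Context: $\mathcal{A}$ is semiprime if $a\mathcal{A}a=\{0\}$ implies $a=0$. $x\circ y=xy+yx$. $\operatorname{QJCent}(\mathcal{A})$: linear $f:\mathcal{A}\to\mathcal{A}$ with $f(x)\circ y=x\circ f(y)$ for all $x,y$. $\operatorname{Cent}(\mathcal{A})$: linear $f$ with $f(xy)=f(x)y=xf(y)$ for all $x,y$. *)

From mathcomp Require Import all_boot all_algebra.
Set Implicit Arguments. Unset Strict Implicit. Unset Printing Implicit Defensive.
Import GRing.Theory.
Local Open Scope ring_scope.

Definition jprod (R : pzRingType) (x y : R) : R := x * y + y * x.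

Definition semiprime (R : pzRingType) : Prop :=
  forall a : R, (forall x : R, a * x * a = 0) -> a = 0.

Definition QJCent (F : fieldType) (A : algType F) (f : {linear A -> A}) : Prop :=
  forall x y : A, jprod (f x) y = jprod x (f y).

Definition Cent (F : fieldType) (A : algType F) (f : {linear A -> A}) : Prop :=
  forall x y : A, f (x * y) = f x * y /\ f (x * y) = x * f y.

From mathcomp Require Import all_boot all_algebra.
Set Implicit Arguments.
Unset Strict Implicit.
Unset Printing Implicit Defensive.
Import GRing.Theory.
Local Open Scope ring_scope.

(* Putting y = 1 in f(x) o y = x o f(y) gives 2 f(x) = x o a with a = f(1).
   Comparing both sides of the defining identity, multiplied by 2, yields
   a [x,y] = [x,y] a: the Jordan associator (x o a) o y - x o (a o y) is the
   commutator of a with [x,y].  In a semiprime ring an element commuting with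
   all commutators is central, so 2 f(x) = 2 a x, and f is multiplication by
   the central element a because 2 is invertible. *)

Lemma jprodMnl (R : pzRingType) (x y : R) n : jprod (x *+ n) y = jprod x y *+ n.
Proof. by rewrite /jprod mulrnAl mulrnAr mulrnDl. Qed.

Lemma jprodMnr (R : pzRingType) (x y : R) n : jprod x (y *+ n) = jprod x y *+ n.
Proof. by rewrite /jprod mulrnAl mulrnAr mulrnDl. Qed.

Lemma jprodr1 (R : pzRingType) (x : R) : jprod x 1 = x *+ 2.
Proof. by rewrite /jprod mulr1 mul1r mulr2n. Qed.

Lemma jprod_assoc_sub (R : pzRingType) (x a y : R) :
  jprod (jprod x a) y - jprod x (jprod y a) =
  a * (x * y - y * x) - (x * y - y * x) * a.
Proof.
rewrite /jprod !(mulrDl, mulrDr, mulrBl, mulrBr, mulrA, mulrN, mulNr).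
rewrite !opprD opprK !addrA.
rewrite [LHS](@GRing.add R).[ACl ((1*6)*(4*7)*2*3*5*8)] !subrr !add0r.
by rewrite [RHS](@GRing.add R).[ACl (1*4*3*2)].
Qed.

Lemma commutatorMr (R : pzRingType) (x y z : R) :
  x * (y * z) - y * z * x = (x * y - y * x) * z + y * (x * z - z * x).
Proof.
rewrite mulrBl mulrBr !mulrA addrA.
by rewrite [RHS](@GRing.add R).[ACl (1*(2*3)*4)] addNr addr0.
Qed.

Lemma semiprime_comm_commutators (R : pzRingType) (a : R) :
  semiprime R -> (forall x y, GRing.comm a (x * y - y * x)) ->
  forall x, GRing.comm a x.
Proof.
move=> sR comm_a x; set d := a * x - x * a.
(* a commutes with [x, x y] = x [x, y] *)
have d_ann y : d * (x * y - y * x) = 0.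
  have := comm_a x (x * y).
  rewrite /GRing.comm -[x * y * x]mulrA -mulrBr mulrA -(mulrA x) -comm_a mulrA.
  by rewrite /d mulrBl => ->; rewrite subrr.
have d_ann_mid y z : d * y * (x * z - z * x) = 0.
  have := d_ann (y * z).
  by rewrite commutatorMr mulrDr mulrA d_ann mul0r add0r mulrA.
(* z := a turns [x, z] into -d, so d y d = 0 for all y *)
apply/eqP; rewrite -subr_eq0; apply/eqP; apply: sR => y.
by apply/eqP; rewrite -oppr_eq0 -mulrN opprB d_ann_mid.
Qed.

Lemma Cent_QJCent (F : fieldType) (A : algType F) (f : {linear A -> A}) :
  Cent f -> QJCent f.
Proof.
move=> Cf x y; have [fxy_l fxy_r] := Cf x y; have [fyx_l fyx_r] := Cf y x.
by rewrite /jprod -fxy_l -fyx_r fxy_r fyx_l addrC.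
Qed.

Section QJCentroid.

Variables (F : fieldType) (A : algType F) (f : {linear A -> A}).
Hypothesis Qf : QJCent f.

Lemma QJCent_mulr2n x : f x *+ 2 = jprod x (f 1).
Proof. by rewrite -Qf jprodr1. Qed.

Lemma QJCent_comm_commutator x y : GRing.comm (f 1) (x * y - y * x).
Proof.
apply/eqP; rewrite -subr_eq0 -jprod_assoc_sub -!QJCent_mulr2n.
by rewrite jprodMnl jprodMnr Qf subrr.
Qed.

Hypothesis two_neq0 : 2%:R != 0 :> F.
Hypothesis sA : semiprime A.

Let comm_f1 := semiprime_comm_commutators sA QJCent_comm_commutator.

Lemma QJCentE x : f x = f 1 * x.
Proof.
have := QJCent_mulr2n x; rewrite /jprod -comm_f1 => /eqP.
rewrite -mulr2n -subr_eq0 -mulrnBl -scaler_nat scaler_eq0 (negPf two_neq0).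
by rewrite subr_eq0 => /eqP.
Qed.

Lemma QJCent_Cent : Cent f.
Proof.
move=> x y; rewrite (QJCentE (x * y)) (QJCentE x) (QJCentE y).
by rewrite mulrA comm_f1 -mulrA.
Qed.

End QJCentroid.

Theorem proposition3p5 (F : fieldType) (A : algType F)
  (charF : ~~ (2%N \in [pchar F])) (sA : semiprime A) :
  forall f : {linear A -> A}, QJCent f <-> Cent f.
Proof.
have two_neq0 : 2%:R != 0 :> F by move: charF; rewrite inE negb_and.
move=> f; split=> [Qf|]; [exact: QJCent_Cent | exact: Cent_QJCent].
Qed.
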